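(* Let $(X,\le)$ be a non-empty strictly inductive poset, $f:X\to X$ and $a_0\in X$, let $(a_k)_k$ be the transfinite sequence of iterates of $f$ from $a_0$, $A=\{a_k\mid k\text{ an ordinal}\}$, and let $N$ be the smallest subset of $X$ containing $a_0$, closed under $f$, and closed under non-empty least upper bounds. If the sequence $(a_k)_k$ is monotone (i.e. $a_k\le a_l$ whenever $k\le l$), then $N\subseteq A$.
   Context: A poset is strictly inductive if every non-empty chain has a least upper bound $\mathrm{lub}$ in $X$. The transfinite iterates are defined by $a_0$ given, $a_{k+1}=f(a_k)$, and $a_l=\mathrm{lub}\{a_k\mid k<l\}$ for limit ordinals $l$. A set $Z\subseteq X$ is closed under $f$ if $f(z)\in Z$ for all $z\in Z$, and closed under non-empty least upper bounds if for every non-empty $P\subseteq Z$, $\mathrm{lub}(P)$ exists and belongs to $Z$. *)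

From Stdlib Require Import Classical.

Set Implicit Arguments.

Section Poset.
Variables (X : Type) (le : X -> X -> Prop).

Definition is_poset : Prop :=
  (forall x, le x x) /\
  (forall x y, le x y -> le y x -> x = y) /\
  (forall x y z, le x y -> le y z -> le x z).

Definition is_lub (P : X -> Prop) (x : X) : Prop :=
  (forall p, P p -> le p x) /\
  (forall u, (forall p, P p -> le p u) -> le x u).

Definition is_chain (P : X -> Prop) : Prop :=
  forall x y, P x -> P y -> le x y \/ le y x.

Definition strictly_inductive : Prop :=
  forall P : X -> Prop, (exists x, P x) -> is_chain P -> exists l, is_lub P l.

Definition closed_under_f (f : X -> X) (Z : X -> Prop) : Prop :=
  forall z, Z z -> Z (f z).

Definition closed_under_lubs (Z : X -> Prop) : Prop :=
  forall P : X -> Prop, (exists x, P x) -> (forall x, P x -> Z x) ->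
    exists l, is_lub P l /\ Z l.
End Poset.

(* A well-ordered index type (W, lt): strict total well-founded order.
   Every ordinal (with its initial segment) is such a W and every such W is
   isomorphic to an ordinal. *)
Definition well_order (W : Type) (lt : W -> W -> Prop) : Prop :=
  (forall k, ~ lt k k) /\
  (forall i j k, lt i j -> lt j k -> lt i k) /\
  (forall i j, lt i j \/ i = j \/ lt j i) /\
  well_founded lt.

(* a : W -> X is the transfinite sequence of iterates of f from a0, indexed
   by the well-order (W, lt):
   a_0 = a0, a_{k+1} = f a_k, a_l = lub {a_k | k < l} for limit l. *)
Definition transfinite_iterates (X : Type) (le : X -> X -> Prop)
    (f : X -> X) (a0 : X) (W : Type) (lt : W -> W -> Prop) (a : W -> X) : Prop :=
  forall k : W,
    ((forall j, ~ lt j k) -> a k = a0) /\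
    (forall j, lt j k -> (forall m, ~ (lt j m /\ lt m k)) -> a k = f (a j)) /\
    ((exists j, lt j k) ->
     (forall j, lt j k -> exists m, lt j m /\ lt m k) ->
     is_lub le (fun x => exists j, lt j k /\ x = a j) (a k)).

Definition iterates_monotone (X : Type) (le : X -> X -> Prop)
    (f : X -> X) (a0 : X) : Prop :=
  forall (W : Type) (lt : W -> W -> Prop) (a : W -> X),
    well_order lt -> transfinite_iterates le f a0 lt a ->
    forall k l, (k = l \/ lt k l) -> le (a k) (a l).

Definition iterates_set (X : Type) (le : X -> X -> Prop)
    (f : X -> X) (a0 : X) : X -> Prop :=
  fun x => exists (W : Type) (lt : W -> W -> Prop) (a : W -> X) (k : W),
    well_order lt /\ transfinite_iterates le f a0 lt a /\ a k = x.

From Stdlib Require Import Classical ProofIrrelevance.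

(* Two iteration sequences from a0 are interlocked: for any of their values x, y,
   either x <= y and f x <= y unless x = y, or symmetrically; this follows by a
   double well-founded induction from the monotonicity of the iterates.  Hence the
   set A of all iterates is a chain on which x < y implies f x <= y, and every y in A is obtained from the elements of A below y by the
   iteration rule (a0, f of the largest, or their lub), which also makes the strict
   order on A well-founded.  So whenever t is obtained by the iteration rule from a
   downward closed part D of A, indexing D by itself and t by a new top element is a
   transfinite iteration, and t lies in A.  With D empty, D = {z <= y}, and
   D = {z < lub P} this shows that A contains a0 and is closed under f and under
   lubs; the minimality of N concludes. *)

Set Implicit Arguments.

Lemma index_cases (W : Type) (r : W -> W -> Prop) (k : W) :
  (forall j, ~ r j k) \/
  (exists j, r j k /\ forall m, ~ (r j m /\ r m k)) \/
  ((exists j, r j k) /\ forall j, r j k -> exists m, r j m /\ r m k).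
Proof.
  destruct (classic (exists j, r j k)) as [Hne | Hzero].
  - right.
    destruct (classic (exists j, r j k /\ forall m, ~ (r j m /\ r m k)))
      as [Hsucc | Hnsucc]; [left; exact Hsucc |].
    right; split; [exact Hne |]. intros j Hj. apply NNPP; intros Hnone.
    apply Hnsucc; exists j; split; [exact Hj |].
    intros m Hm; apply Hnone; exists m; exact Hm.
  - left; intros j Hj; apply Hzero; exists j; exact Hj.
Qed.

Lemma well_founded_least (W : Type) (r : W -> W -> Prop) (P : W -> Prop) (k : W) :
  well_founded r -> P k -> exists m, P m /\ forall j, r j m -> ~ P j.
Proof.
  intros Hwf. induction k as [k IH] using (well_founded_ind Hwf). intros Hk.
  destruct (classic (exists j, r j k /\ P j)) as [[j [Hj HPj]] | Hmin].
  - exact (IH j Hj HPj).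
  - exists k; split; [exact Hk |]. intros j Hj HPj; apply Hmin; exists j; auto.
Qed.

Section Iterates.
Variables (X : Type) (le : X -> X -> Prop) (f : X -> X) (a0 : X).
Hypotheses (le_po : is_poset le) (iter_mono : iterates_monotone le f a0).

Lemma po_refl x : le x x. Proof. apply le_po. Qed.
Lemma po_antisym x y : le x y -> le y x -> x = y. Proof. apply le_po. Qed.
Lemma po_trans x y z : le x y -> le y z -> le x z. Proof. apply le_po. Qed.

Definition slt x y := le x y /\ x <> y.

Lemma slt_not_le x y : slt x y -> ~ le y x.
Proof. intros [Hxy Hne] Hyx. exact (Hne (po_antisym Hxy Hyx)). Qed.

Lemma slt_asym x y : slt x y -> ~ slt y x.
Proof. intros Hxy [Hyx _]. exact (slt_not_le Hxy Hyx). Qed.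

Lemma slt_trans x y z : slt x y -> slt y z -> slt x z.
Proof.
  intros [Hxy Hnxy] [Hyz _]. split; [exact (po_trans Hxy Hyz) |].
  intros ->. exact (Hnxy (po_antisym Hxy Hyz)).
Qed.

Definition tower_le x y := le x y /\ (x <> y -> le (f x) y).

Definition tower_comparable x y := tower_le x y \/ tower_le y x.

Lemma tower_le_refl x : tower_le x x.
Proof. split; [apply po_refl | intros Hne; exfalso; exact (Hne eq_refl)]. Qed.

Lemma tower_comparable_sym x y : tower_comparable x y -> tower_comparable y x.
Proof. intros [H | H]; [right | left]; exact H. Qed.

Section Iteration.
Variables (W : Type) (r : W -> W -> Prop) (a : W -> X).
Hypotheses (r_wo : well_order r) (a_it : transfinite_iterates le f a0 r a).

Lemma iteration_mono {j k : W} : r j k -> le (a j) (a k).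
Proof. intros Hjk. apply (iter_mono r_wo a_it); right; exact Hjk. Qed.

Lemma a0_le_iteration k : le a0 (a k).
Proof.
  pose proof r_wo as (_ & Htrans & _ & Hwf).
  destruct (well_founded_least (fun m => m = k \/ r m k) k Hwf (or_introl eq_refl))
    as [m [Hmk Hmin]].
  assert (Hzero : forall j, ~ r j m).
  { intros j Hjm. apply (Hmin j Hjm). right.
    destruct Hmk as [-> | Hmk]; [exact Hjm | exact (Htrans _ _ _ Hjm Hmk)]. }
  rewrite <- (proj1 (a_it m) Hzero).
  destruct Hmk as [-> | Hmk]; [apply po_refl | exact (iteration_mono Hmk)].
Qed.

Lemma iteration_tower_step x m :
  le a0 x -> (forall n, r n m -> tower_comparable x (a n)) ->
  tower_le x (a m) \/ le (a m) x.
Proof.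
  intros Hx IH. destruct (a_it m) as [Hzero [Hsucc Hlim]].
  destruct (index_cases r m) as [Hm | [[n [Hn Hnm]] | [Hne Hdense]]].
  - right. rewrite (Hzero Hm). exact Hx.
  - pose proof (Hsucc n Hn Hnm) as Hstep. pose proof (iteration_mono Hn) as Hmono.
    destruct (classic (x = a n)) as [-> | Hxn].
    + left. split; [exact Hmono | intros _; rewrite Hstep; apply po_refl].
    + destruct (IH n Hn) as [[Hle Hf] | [_ Hf]].
      * left. split; [exact (po_trans Hle Hmono) | intros _; exact (po_trans (Hf Hxn) Hmono)].
      * right. rewrite Hstep. apply Hf. intros Hnx. exact (Hxn (eq_sym Hnx)).
  - destruct (classic (forall n, r n m -> le (a n) x)) as [Hall | Hex].
    + right. apply (proj2 (Hlim Hne Hdense)). intros p [n [Hn ->]]. exact (Hall n Hn).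
    + apply not_all_ex_not in Hex. destruct Hex as [n Hex].
      apply imply_to_and in Hex. destruct Hex as [Hn Hnx].
      pose proof (iteration_mono Hn) as Hmono.
      destruct (IH n Hn) as [[Hle Hf] | [Hle _]]; [| contradiction].
      assert (Hxn : x <> a n) by (intros ->; exact (Hnx (po_refl _))).
      left. split; [exact (po_trans Hle Hmono) | intros _; exact (po_trans (Hf Hxn) Hmono)].
Qed.

End Iteration.

Lemma iterations_tower_comparable (W : Type) (r : W -> W -> Prop) (a : W -> X)
    (V : Type) (s : V -> V -> Prop) (b : V -> X) :
  well_order r -> transfinite_iterates le f a0 r a ->
  well_order s -> transfinite_iterates le f a0 s b ->
  forall k m, tower_comparable (a k) (b m).
Proof.
  intros Hr Ha Hs Hb.
  pose proof Hr as (_ & _ & _ & Hwf_r). pose proof Hs as (_ & _ & _ & Hwf_s).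
  intros k; induction k as [k IHk] using (well_founded_ind Hwf_r).
  intros m; induction m as [m IHm] using (well_founded_ind Hwf_s).
  destruct (iteration_tower_step Hs Hb m (a0_le_iteration Hr Ha k) IHm) as [Hkm | Hmk];
    [left; exact Hkm |].
  destruct (iteration_tower_step Hr Ha k (a0_le_iteration Hs Hb m)
              (fun j Hj => tower_comparable_sym (IHk j Hj m))) as [Hmk' | Hkm];
    [right; exact Hmk' |].
  left. rewrite (po_antisym Hkm Hmk). apply tower_le_refl.
Qed.

Let A := iterates_set le f a0.

Lemma A_tower_comparable x y : A x -> A y -> tower_comparable x y.
Proof.
  intros [W [r [a [k [Hr [Ha <-]]]]]] [V [s [b [m [Hs [Hb <-]]]]]].
  exact (iterations_tower_comparable Hr Ha Hs Hb k m).
Qed.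

Lemma A_trichotomy x y : A x -> A y -> slt x y \/ x = y \/ slt y x.
Proof.
  intros Hx Hy. destruct (classic (x = y)) as [Hxy | Hxy]; [right; left; exact Hxy |].
  destruct (A_tower_comparable Hx Hy) as [[Hle _] | [Hle _]];
    [left | right; right]; split; auto.
Qed.

Lemma A_chain : is_chain le A.
Proof.
  intros x y Hx Hy.
  destruct (A_trichotomy Hx Hy) as [[Hxy _] | [<- | [Hyx _]]]; auto using po_refl.
Qed.

Lemma A_tower x y : A x -> A y -> slt x y -> le (f x) y.
Proof.
  intros Hx Hy Hxy. destruct (A_tower_comparable Hx Hy) as [[_ Hf] | [Hyx _]].
  - exact (Hf (proj2 Hxy)).
  - exfalso. exact (slt_not_le Hxy Hyx).
Qed.

Lemma A_a0_le x : A x -> le a0 x.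
Proof. intros [W [r [a [k [Hr [Ha <-]]]]]]. exact (a0_le_iteration Hr Ha k). Qed.

Definition below z y := A z /\ slt z y.

Lemma not_below_a0 z : ~ below z a0.
Proof. intros [Hz Hza0]. exact (slt_not_le Hza0 (A_a0_le Hz)). Qed.

Definition next_iterate (D : X -> Prop) (t : X) : Prop :=
  ((forall z, ~ D z) -> t = a0) /\
  (forall v, D v -> (forall w, D w -> ~ slt v w) -> t = f v) /\
  ((exists z, D z) -> (forall v, D v -> exists w, D w /\ slt v w) -> is_lub le D t).

Lemma next_iterate_ext (P Q : X -> Prop) t :
  (forall x, P x <-> Q x) -> next_iterate P t -> next_iterate Q t.
Proof.
  intros HPQ [Hzero [Hsucc Hlim]]. split; [| split].
  - intros HQ. apply Hzero. intros x Hx. exact (HQ x (proj1 (HPQ x) Hx)).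
  - intros v Hv Hmax. apply Hsucc; [apply HPQ; exact Hv |].
    intros w Hw. apply Hmax, HPQ, Hw.
  - intros [z Hz] Hnomax.
    assert (HP : is_lub le P t).
    { apply Hlim; [exists z; apply HPQ; exact Hz |].
      intros v Hv. destruct (Hnomax v (proj1 (HPQ v) Hv)) as [w [Hw Hvw]].
      exists w; split; [apply HPQ; exact Hw | exact Hvw]. }
    destruct HP as [Hub Hleast]. split.
    + intros p Hp. apply Hub, HPQ, Hp.
    + intros u Hu. apply Hleast. intros p Hp. apply Hu, HPQ, Hp.
Qed.

Lemma transfinite_iterates_of_next_iterate (W : Type) (r : W -> W -> Prop) (a : W -> X) :
  (forall i j, r i j \/ i = j \/ r j i) ->
  (forall i j k, r i j -> r j k -> slt (a i) (a j)) ->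
  (forall k, next_iterate (fun x => exists j, r j k /\ x = a j) (a k)) ->
  transfinite_iterates le f a0 r a.
Proof.
  intros Htot Hemb Hnext k. destruct (Hnext k) as [Hzero [Hsucc Hlim]].
  split; [| split].
  - intros Hk. apply Hzero. intros x [j [Hj _]]. exact (Hk j Hj).
  - intros j Hj Hjk. apply Hsucc; [exists j; auto |].
    intros w [m [Hm ->]] Hjm.
    destruct (Htot j m) as [Hr | [<- | Hr]].
    + exact (Hjk m (conj Hr Hm)).
    + exact (proj2 Hjm eq_refl).
    + exact (slt_asym Hjm (Hemb m j k Hr Hj)).
  - intros [j Hj] Hdense. apply Hlim; [exists (a j), j; auto |].
    intros v [i [Hi ->]]. destruct (Hdense i Hi) as [m [Him Hm]].
    exists (a m). split; [exists m; auto | exact (Hemb i m k Him Hm)].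
Qed.

Section IterationInA.
Variables (W : Type) (r : W -> W -> Prop) (a : W -> X).
Hypotheses (r_wo : well_order r) (a_it : transfinite_iterates le f a0 r a).

Lemma iteration_in_A k : A (a k).
Proof. exists W, r, a, k. auto. Qed.

Lemma least_index k : exists k', a k' = a k /\ forall j, r j k' -> slt (a j) (a k').
Proof.
  pose proof r_wo as (_ & _ & _ & Hwf).
  destruct (well_founded_least (fun m => a m = a k) k Hwf eq_refl) as [k' [Hk' Hmin]].
  exists k'; split; [exact Hk' |]. intros j Hj.
  split; [exact (iteration_mono r_wo a_it Hj) | rewrite Hk'; exact (Hmin j Hj)].
Qed.

(* Computing at the least index of the value [a k] makes all earlier values
   strictly below it. *)
Lemma iteration_next_iterate k : next_iterate (fun z => below z (a k)) (a k).
Proof.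
  destruct (least_index k) as [k' [<- Hpred]].
  assert (Hpred_below : forall j, r j k' -> below (a j) (a k')).
  { intros j Hj. exact (conj (iteration_in_A j) (Hpred j Hj)). }
  destruct (a_it k') as [Hzero [Hsucc Hlim]].
  destruct (index_cases r k') as [Hk | [[i [Hi Hii]] | [[i Hi] Hdense]]].
  - rewrite (Hzero Hk). split; [reflexivity | split].
    + intros v Hv. exfalso. exact (not_below_a0 Hv).
    + intros [z Hz]. exfalso. exact (not_below_a0 Hz).
  - pose proof (Hsucc i Hi Hii) as Hy. split; [| split].
    + intros Hnone. exfalso. exact (Hnone (a i) (Hpred_below i Hi)).
    + intros v [Hv Hvk] Hmax. rewrite Hy.
      destruct (A_trichotomy Hv (iteration_in_A i)) as [Hvi | [<- | Hiv]]; [| reflexivity |].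
      * exfalso. exact (Hmax (a i) (Hpred_below i Hi) Hvi).
      * exfalso. apply (slt_not_le Hvk). rewrite Hy. exact (A_tower (iteration_in_A i) Hv Hiv).
    + intros _ Hnomax. exfalso.
      destruct (Hnomax (a i) (Hpred_below i Hi)) as [w [[Hw Hwk] Hiw]].
      apply (slt_not_le Hwk). rewrite Hy. exact (A_tower (iteration_in_A i) Hw Hiw).
  - split; [| split].
    + intros Hnone. exfalso. exact (Hnone (a i) (Hpred_below i Hi)).
    + intros v [Hv Hvk] Hmax. exfalso. apply (slt_not_le Hvk).
      apply (proj2 (Hlim (ex_intro _ i Hi) Hdense)). intros p [j [Hj ->]].
      destruct (A_trichotomy (iteration_in_A j) Hv) as [[Hjv _] | [-> | Hvj]];
        [exact Hjv | apply po_refl |].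
      exfalso. exact (Hmax (a j) (Hpred_below j Hj) Hvj).
    + intros _ _. split; [intros z [_ [Hzk _]]; exact Hzk |].
      intros u Hu. apply (proj2 (Hlim (ex_intro _ i Hi) Hdense)). intros p [j [Hj ->]].
      exact (Hu (a j) (Hpred_below j Hj)).
Qed.

Lemma iteration_below {k : W} {z : X} : below z (a k) -> exists j, r j k /\ a j = z.
Proof.
  pose proof r_wo as (_ & Htrans & _ & Hwf).
  induction k as [k IH] using (well_founded_ind Hwf). intros [Hz Hzk].
  destruct (a_it k) as [Hzero [Hsucc Hlim]].
  destruct (index_cases r k) as [Hk | [[j [Hj Hjj]] | [Hne Hdense]]].
  - exfalso. rewrite (Hzero Hk) in Hzk. exact (not_below_a0 (conj Hz Hzk)).
  - destruct (A_trichotomy Hz (iteration_in_A j)) as [Hzj | [-> | Hjz]].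
    + destruct (IH j Hj (conj Hz Hzj)) as [i [Hij <-]].
      exists i; split; [exact (Htrans _ _ _ Hij Hj) | reflexivity].
    + exists j; auto.
    + exfalso. apply (slt_not_le Hzk). rewrite (Hsucc j Hj Hjj).
      exact (A_tower (iteration_in_A j) Hz Hjz).
  - destruct (classic (forall j, r j k -> le (a j) z)) as [Hall | Hex].
    + exfalso. apply (slt_not_le Hzk). apply (proj2 (Hlim Hne Hdense)).
      intros p [j [Hj ->]]. exact (Hall j Hj).
    + apply not_all_ex_not in Hex. destruct Hex as [j Hex].
      apply imply_to_and in Hex. destruct Hex as [Hj Hjz].
      destruct (A_trichotomy Hz (iteration_in_A j)) as [Hzj | [-> | [Hjz' _]]];
        [| exfalso; exact (Hjz (po_refl _)) | contradiction].
      destruct (IH j Hj (conj Hz Hzj)) as [i [Hij <-]].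
      exists i; split; [exact (Htrans _ _ _ Hij Hj) | reflexivity].
Qed.

End IterationInA.

Lemma below_Acc y : A y -> Acc below y.
Proof.
  intros [W [r [a [k [Hr [Ha <-]]]]]].
  pose proof Hr as (_ & _ & _ & Hwf).
  induction k as [k IH] using (well_founded_ind Hwf).
  constructor; intros z Hz.
  destruct (iteration_below Hr Ha Hz) as [j [Hj <-]]. exact (IH j Hj).
Qed.

Lemma next_iterate_below y : A y -> next_iterate (fun z => below z y) y.
Proof. intros [W [r [a [k [Hr [Ha <-]]]]]]. exact (iteration_next_iterate Hr Ha k). Qed.

Section Extension.
Variables (D : X -> Prop) (t : X).
Hypotheses (D_A : forall z, D z -> A z)
  (D_down : forall z y, D y -> below z y -> D z)
  (t_next : next_iterate D t).

(* [t] gets a fresh top index [None]: it may already be a value in [D] when it is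
   a fixed point of [f]. *)
Definition ext_index := option {y : X | D y}.

Definition ext_lt (p q : ext_index) : Prop :=
  match p, q with
  | Some u, Some v => slt (proj1_sig u) (proj1_sig v)
  | Some _, None => True
  | None, _ => False
  end.

Definition ext_seq (p : ext_index) : X :=
  match p with Some u => proj1_sig u | None => t end.

Lemma ext_well_order : well_order ext_lt.
Proof.
  split; [| split; [| split]].
  - intros [[y Hy] |]; simpl; [intros [_ Hne]; exact (Hne eq_refl) | tauto].
  - intros [u |] [v |] [w |]; simpl; try tauto. apply slt_trans.
  - intros [[x Hx] |] [[y Hy] |]; simpl; auto.
    destruct (A_trichotomy (D_A Hx) (D_A Hy)) as [Hxy | [<- | Hyx]]; auto.
    right; left. rewrite (proof_irrelevance _ Hx Hy). reflexivity.
  - assert (HSome : forall y (Hy : D y), Acc ext_lt (Some (exist _ y Hy))).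
    { intros y Hy. pose proof (below_Acc (D_A Hy)) as Hacc. revert Hy.
      induction Hacc as [y _ IH]. intros Hy. constructor.
      intros [[z Hz] |] Hlt; simpl in Hlt; [| contradiction].
      exact (IH z (conj (D_A Hz) Hlt) Hz). }
    intros [[y Hy] |]; [exact (HSome y Hy) |].
    constructor. intros [[y Hy] |] Hlt; simpl in Hlt; [exact (HSome y Hy) | contradiction].
Qed.

Lemma ext_iterates : transfinite_iterates le f a0 ext_lt ext_seq.
Proof.
  apply transfinite_iterates_of_next_iterate.
  - apply ext_well_order.
  - intros [u |] [v |] k Hij Hjk; simpl in *; tauto.
  - intros [[y Hy] |].
    + apply next_iterate_ext with (P := fun z => below z y);
        [| exact (next_iterate_below (D_A Hy))].
      intros x; split.
      * intros Hx. exists (Some (exist _ x (D_down Hy Hx))).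
        simpl; split; [apply Hx | reflexivity].
      * intros [[[z Hz] |] [Hlt ->]]; simpl in *; [exact (conj (D_A Hz) Hlt) | contradiction].
    + apply next_iterate_ext with (P := D); [| exact t_next].
      intros x; split.
      * intros Hx. exists (Some (exist _ x Hx)). simpl; auto.
      * intros [[[z Hz] |] [Hlt ->]]; simpl in *; [exact Hz | contradiction].
Qed.

Lemma next_iterate_in_A : A t.
Proof.
  exists ext_index, ext_lt, ext_seq, None.
  split; [exact ext_well_order | split; [exact ext_iterates | reflexivity]].
Qed.

End Extension.

Lemma a0_in_A : A a0.
Proof.
  apply next_iterate_in_A with (D := fun _ => False); try tauto.
  split; [reflexivity | split]; [tauto | intros [z []]].
Qed.

Lemma f_in_A y : A y -> A (f y).
Proof.
  intros Hy. apply next_iterate_in_A with (D := fun z => A z /\ le z y).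
  - intros z [Hz _]; exact Hz.
  - intros z w [_ Hwy] [Hz Hzw]. exact (conj Hz (po_trans (proj1 Hzw) Hwy)).
  - split; [| split].
    + intros Hnone. exfalso. exact (Hnone y (conj Hy (po_refl y))).
    + intros v [Hv Hvy] Hmax. destruct (classic (v = y)) as [-> | Hne]; [reflexivity |].
      exfalso. exact (Hmax y (conj Hy (po_refl y)) (conj Hvy Hne)).
    + intros _ Hnomax. exfalso.
      destruct (Hnomax y (conj Hy (po_refl y))) as [w [[_ Hwy] Hyw]].
      exact (slt_not_le Hyw Hwy).
Qed.

Lemma A_closed_under_lubs : strictly_inductive le -> closed_under_lubs le A.
Proof.
  intros Hsi P [p Hp] HPA.
  destruct (Hsi P (ex_intro _ p Hp)) as [l Hl].
  { intros x y Hx Hy. exact (A_chain (HPA x Hx) (HPA y Hy)). }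
  exists l; split; [exact Hl |].
  destruct (classic (P l)) as [HPl | HPl]; [exact (HPA l HPl) |].
  assert (HP_below : forall q, P q -> below q l).
  { intros q Hq. split; [exact (HPA q Hq) |].
    split; [exact (proj1 Hl q Hq) | intros ->; exact (HPl Hq)]. }
  apply next_iterate_in_A with (D := fun z => below z l).
  - intros z [Hz _]; exact Hz.
  - intros z y [_ Hyl] [Hz Hzy]. exact (conj Hz (slt_trans Hzy Hyl)).
  - split; [| split].
    + intros Hnone. exfalso. exact (Hnone p (HP_below p Hp)).
    + intros v [Hv Hvl] Hmax. exfalso. apply (slt_not_le Hvl). apply (proj2 Hl).
      intros q Hq.
      destruct (A_trichotomy (HPA q Hq) Hv) as [[Hqv _] | [-> | Hvq]];
        [exact Hqv | apply po_refl |].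
      exfalso. exact (Hmax q (HP_below q Hq) Hvq).
    + intros _ _. split; [intros z [_ [Hzl _]]; exact Hzl |].
      intros u Hu. apply (proj2 Hl). intros q Hq. exact (Hu q (HP_below q Hq)).
Qed.

End Iterates.

Theorem mainTheorem6 (X : Type) (le : X -> X -> Prop) (f : X -> X) (a0 : X)
    (N : X -> Prop) :
  inhabited X ->
  is_poset le ->
  strictly_inductive le ->
  (* N is the smallest subset containing a0, closed under f and under
     non-empty least upper bounds *)
  N a0 -> closed_under_f f N -> closed_under_lubs le N ->
  (forall Z : X -> Prop, Z a0 -> closed_under_f f Z -> closed_under_lubs le Z ->
     forall x, N x -> Z x) ->
  iterates_monotone le f a0 ->
  forall x, N x -> iterates_set le f a0 x.
Proof.
  intros _ Hpo Hsi _ _ _ Hmin Hmon.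
  apply Hmin.
  - exact (a0_in_A Hpo Hmon).
  - intros y Hy. exact (f_in_A Hpo Hmon Hy).
  - exact (A_closed_under_lubs Hpo Hmon Hsi).
Qed.
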